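(* Let $K$ be a field, $\mathcal{H}$ a simple hypergraph on $\{x_1,\dots,x_n\}$ with edges $S_1,\dots,S_m$, $R=K[x_1,\dots,x_n]$, let $i,j$ be integers and let $\mathcal{B}_{i,j}$ be the set of basis elements $\overline{e_{\ell_1,\dots,\ell_i}}$ of $\overline{T}_i$ with $\overline{e_{\ell_1,\dots,\ell_i}}\in\mathrm{Ker}\,\overline{\partial}_i\setminus\mathrm{Im}\,\overline{\partial}_{i+1}$ and $|\bigcup_{k=1}^iS_{\ell_k}|=j$. (1) If for all pairwise distinct edges $E_1,\dots,E_i$ of $\mathcal{H}$ (in any order) with $|\bigcup_{\ell=1}^iE_\ell|=j$ we have $E_1\nsubseteq\bigcup_{\ell=2}^iE_\ell$, then $\{e+\mathrm{Im}\,\overline{\partial}_{i+1}: e\in\mathcal{B}_{i,j}\}$ generates $(\mathrm{Ker}\,\overline{\partial}_i/\mathrm{Im}\,\overline{\partial}_{i+1})_j$ over $K$, and hence $\beta_{i,j}(R/I(\mathcal{H}))\le|\mathcal{B}_{i,j}|$. (2) If for all pairwise distinct edges $E_1,\dots,E_{i+1}$ of $\mathcal{H}$ with $E_{i+1}\subseteq\bigcup_{\ell=1}^iE_\ell$ and $|\bigcup_{\ell=1}^iE_\ell|=j$ we have $E_k\nsubseteq\bigcup_{1\le\ell\le i+1,\ell\neq k}E_\ell$ for all $1\le k\le i$, then $\{e+\mathrm{Im}\,\overline{\partial}_{i+1}: e\in\mathcal{B}_{i,j}\}$ is linearly independent over $K$ in $(\mathrm{Ker}\,\overline{\partial}_i/\mathrm{Im}\,\overline{\partial}_{i+1})_j$,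 and hence $\beta_{i,j}(R/I(\mathcal{H}))\ge|\mathcal{B}_{i,j}|$. (3) If the hypotheses of both (1) and (2) hold, then $\beta_{i,j}(R/I(\mathcal{H}))=|\mathcal{B}_{i,j}|$. In particular this equality holds when $j=ti$, where $t=\max\{|S|:S\in\mathcal{E}(\mathcal{H})\}$.
   Context: A simple hypergraph $\mathcal{H}$ on $\{x_1,\dots,x_n\}$ is a set $\mathcal{E}(\mathcal{H})$ of subsets (edges) of cardinality at least $2$, none contained in another; $I(\mathcal{H})=\langle \prod_{x\in S}x : S\in\mathcal{E}(\mathcal{H})\rangle\subseteq R$, $R$ standard graded, $\beta_{i,j}(R/I)=\dim_K\mathrm{Tor}_i^R(R/I,K)_j$. With edges ordered $S_1,\dots,S_m$, let $\overline{T}_0=K$ and for $i\ge1$ let $\overline{T}_i$ be the $K$-vector space with basis $\overline{e_{\ell_1,\dots,\ell_i}}$, $1\le\ell_1<\dots<\ell_i\le m$, where $\overline{e_{\ell_1,\dots,\ell_i}}$ has degree $|\bigcup_{t=1}^iS_{\ell_t}|$, with differential $\overline{\partial}_i(\overline{e_{\ell_1,\dots,\ell_i}})=\sum_{k:\,S_{\ell_k}\subseteq\bigcup_{t\neq k}S_{\ell_t}}(-1)^k\,\overline{e_{\ell_1,\dots,\widehat{\ell_k},\dots,\ell_i}}$ (this is the Taylor resolution of $R/I(\mathcal{H})$ tensored with $K=R/\langle x_1,\dots,x_n\rangle$), so that $\beta_{i,j}(R/I(\mathcal{H}))=\dim_K(\mathrm{Ker}\,\overline{\partial}_i/\mathrm{Im}\,\overline{\partial}_{i+1})_j$.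 *)

From HB Require Import structures.
From mathcomp Require Import all_boot all_order all_algebra.
Set Implicit Arguments.
Unset Strict Implicit.
Unset Printing Implicit Defensive.
Import GRing.Theory.
Local Open Scope ring_scope.

(* A hypergraph on vertices 'I_n with edges S_1..S_m, given as S : 'I_m -> {set 'I_n}
   (the order of edges is the order of 'I_m). *)
Definition simple_hypergraph (n m : nat) (S : 'I_m -> {set 'I_n}) : Prop :=
  (forall a, 2 <= #|S a|)%N /\ (forall a b, a != b -> ~~ (S a \subset S b)).

Section Taylor.
Variables (K : fieldType) (n m : nat) (S : 'I_m -> {set 'I_n}).

(* The direct sum of all the T̄_i : coefficient functions on subsets
   L = {l_1 < ... < l_i} of the edge indices. *)
Definition Tbar := {ffun {set 'I_m} -> K^o}.

Definition ebar (L : {set 'I_m}) : Tbar := [ffun X => (X == L)%:R].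

Definition edeg (L : {set 'I_m}) : nat := #|\bigcup_(l in L) S l|.

(* position (1-indexed) of k in the increasing enumeration of L *)
Definition pos (L : {set 'I_m}) (k : 'I_m) : nat := #|[set l in L | (l <= k)%N]|.

Definition dbar_e (L : {set 'I_m}) : Tbar :=
  \sum_(k in L | S k \subset \bigcup_(l in L | l != k) S l)
     (-1) ^+ pos L k *: ebar (L :\ k).

Definition dbar_fun (f : Tbar) : Tbar := \sum_(L : {set 'I_m}) f L *: dbar_e L.

Definition dbar : 'End(Tbar) := linfun dbar_fun.

Definition Ti (i : nat) : {vspace Tbar} :=
  <<[seq ebar L | L <- enum [set L : {set 'I_m} | #|L| == i]]>>%VS.
Definition Tij (i j : nat) : {vspace Tbar} :=
  <<[seq ebar L | L <- enum [set L : {set 'I_m} | (#|L| == i) && (edeg L == j)]]>>%VS.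

Definition Ker_ij (i j : nat) : {vspace Tbar} := (lker dbar :&: Tij i j)%VS.
Definition Im_i1 (i : nat) : {vspace Tbar} := (dbar @: Ti i.+1)%VS.
Definition Im_ij (i j : nat) : {vspace Tbar} := (Im_i1 i :&: Tij i j)%VS.

(* beta_{i,j}(R/I(H)) = dim_K (Ker \bar\partial_i / Im \bar\partial_{i+1})_j *)
Definition betti (i j : nat) : nat := (\dim (Ker_ij i j) - \dim (Im_ij i j))%N.

Definition Bij (i j : nat) : {set {set 'I_m}} :=
  [set L : {set 'I_m} | [&& #|L| == i, edeg L == j,
                          ebar L \in lker dbar & ebar L \notin Im_i1 i]].

Definition hyp1 (i j : nat) : Prop :=
  forall L : {set 'I_m}, #|L| = i -> edeg L = j ->
  forall k, k \in L -> ~~ (S k \subset \bigcup_(l in L | l != k) S l).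

Definition hyp2 (i j : nat) : Prop :=
  forall L : {set 'I_m}, #|L| = i -> edeg L = j ->
  forall p, p \notin L -> S p \subset \bigcup_(l in L) S l ->
  forall k, k \in L -> ~~ (S k \subset \bigcup_(l in p |: L | l != k) S l).

Definition tmax : nat := (\max_(a < m) #|S a|)%N.

End Taylor.

(* Over K, the differential sends e_L to a signed sum of the faces e_(L - k) over the
   edges k of L covered by the other edges of L, so e_L is a cycle iff no edge of L
   is covered by the others.  Under (1) this holds for every L of size i and degree j:
   each basis vector of degree (i, j) is a cycle, hence lies in B or is a boundary, and
   the cycles lie in span B + boundaries.  Under (2), if e_L with L in B occurred in
   the boundary of some e_X, then X = L + k with k the only covered edge of X, so
   e_L = +-d(e_X) would be a boundary; thus boundaries have zero L-coordinate for all
   L in B and meet span B trivially.  As d o d = 0, both facts turn into dimension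
   bounds on Ker / Im.  When j = t i, the i edges are pairwise disjoint of maximal
   size t, which forces both hypotheses. *)

From HB Require Import structures.
From mathcomp Require Import all_boot all_order all_algebra.
From mathcomp Require Import zify ring.
Set Implicit Arguments.
Unset Strict Implicit.
Unset Printing Implicit Defensive.
Import GRing.Theory.
Local Open Scope ring_scope.

Section DimensionBounds.
Variables (K : fieldType) (vT : vectType K).
Implicit Types U V W : {vspace vT}.

Lemma dimv_subn_leq_of_subv_addv U V W :
  (W <= U + V)%VS -> (\dim W - \dim V <= \dim U)%N.
Proof.
move=> /dimvS leW; rewrite leq_subLR addnC.
by apply: leq_trans leW _; rewrite -dimv_sum_cap leq_addr.
Qed.

Lemma dimv_leq_subn_of_disjoint U V W :
  (U :&: V = 0)%VS -> (U + V <= W)%VS -> (\dim U <= \dim W - \dim V)%N.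
Proof.
move=> UV0 /dimvS; rewrite dimv_disjoint_sum // => leW.
by rewrite leq_subRL ?(leq_trans (leq_addl _ _) leW) // addnC.
Qed.

End DimensionBounds.

Lemma leq_card_bigcup (I T : finType) (P : pred I) (F : I -> {set T}) :
  (#|\bigcup_(i | P i) F i| <= \sum_(i | P i) #|F i|)%N.
Proof.
elim/big_rec2: _ => [|i A s _ leAs]; first by rewrite cards0.
by rewrite (leq_trans (leq_card_setU _ _).1) // leq_add2l.
Qed.

Lemma sum_antisym (V : zmodType) (m : nat) (F : 'I_m -> 'I_m -> V) :
  (forall a, F a a = 0) -> (forall a b : 'I_m, (a < b)%N -> F a b + F b a = 0) ->
  \sum_a \sum_b F a b = 0.
Proof.
move=> F0 Fab; rewrite pair_bigA /= (bigID (fun p : 'I_m * 'I_m => (p.1 < p.2)%N)) /=.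
pose swap (p : 'I_m * 'I_m) := (p.2, p.1).
have swapK : involutive swap by case.
have -> : \sum_(p : 'I_m * 'I_m | ~~ (p.1 < p.2)%N) F p.1 p.2 =
          \sum_(p : 'I_m * 'I_m | (p.1 < p.2)%N) F p.2 p.1.
  rewrite (reindex_inj (inv_inj swapK)) /= big_mkcond [RHS]big_mkcond.
  apply: eq_bigr => -[a b] _ /=.
  by case: ltngtP => // /val_inj ->; rewrite F0.
by rewrite -big_split big1 // => -[a b] /= /Fab.
Qed.

Section Coordinates.
Variables (K : fieldType) (m : nat).
Local Notation Tbar := (Tbar K m).
Local Notation ebar := (@ebar K m).
Local Notation span_ebar A := <<[seq ebar L | L <- enum A]>>%VS.

Lemma ebarE L X : ebar L X = (X == L)%:R.
Proof. by rewrite ffunE. Qed.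

Lemma Tbar_scaleE (a : K) (f : Tbar) X : (a *: f) X = a * f X.
Proof. by rewrite ffunE. Qed.

Lemma sum_ebarE (P : pred {set 'I_m}) (c : {set 'I_m} -> K) X :
  (\sum_(L | P L) c L *: ebar L) X = (P X)%:R * c X.
Proof.
rewrite sum_ffunE; have [PX|PnX] := boolP (P X).
  rewrite (bigD1 X) //= big1 => [|L /andP[_ LX]]; rewrite Tbar_scaleE ebarE.
    by rewrite eqxx mulr1 mul1r addr0.
  by rewrite eq_sym (negPf LX) mulr0.
rewrite mul0r big1 // => L PL; rewrite Tbar_scaleE ebarE.
by case: eqP => [XL|]; [rewrite XL PL in PnX | rewrite mulr0].
Qed.

Lemma Tbar_sum_ebar (f : Tbar) : f = \sum_X f X *: ebar X.
Proof. by apply/ffunP => X; rewrite sum_ebarE mul1r. Qed.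

Lemma span_ebarP (A : {set {set 'I_m}}) (f : Tbar) :
  reflect (forall X, X \notin A -> f X = 0) (f \in span_ebar A).
Proof.
apply: (iffP idP) => [fA X XnA | f0].
  rewrite (coord_span fA) sum_ffunE big1 // => k _.
  have kA : (k < size (enum A))%N by rewrite -cardE.
  rewrite Tbar_scaleE (nth_map set0) // ebarE.
  have := mem_nth set0 kA; rewrite mem_enum.
  by case: eqP => [<-|]; rewrite ?(negPf XnA) ?mulr0.
rewrite (Tbar_sum_ebar f) (bigID (mem A)) /= [X in _ + X]big1 ?addr0;
  last by move=> X /f0->; rewrite scale0r.
by apply: memv_suml => X XA; rewrite memvZ // memv_span // map_f // mem_enum.
Qed.

Lemma mem_Ti (i : nat) (L : {set 'I_m}) : #|L| = i -> ebar L \in Ti K m i.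
Proof. by move=> cL; rewrite memv_span // map_f // mem_enum inE cL. Qed.

Lemma dim_span_ebar (A : {set {set 'I_m}}) : \dim (span_ebar A) = #|A|.
Proof.
suff /eqP -> : free [seq ebar L | L <- enum A] by rewrite size_map cardE.
rewrite -[[seq _ | _ <- _]]in_tupleE; apply/freeP => c c0 k.
have kA : (k < size (enum A))%N by rewrite -(size_map ebar).
have := congr1 (fun f : Tbar => f (nth set0 (enum A) k)) c0.
rewrite /= sum_ffunE ffunE (bigD1 k) //= big1 => [|k' k'k].
  by rewrite Tbar_scaleE (nth_map set0) // ebarE eqxx mulr1 addr0.
have k'A : (k' < size (enum A))%N by rewrite -(size_map ebar).
rewrite Tbar_scaleE (nth_map set0) // ebarE nth_uniq ?enum_uniq //.
by rewrite (inj_eq val_inj) eq_sym (negPf k'k) mulr0.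
Qed.

End Coordinates.

Section TaylorDifferential.
Variables (K : fieldType) (n m : nat) (S : 'I_m -> {set 'I_n}).
Local Notation Tbar := (Tbar K m).
Local Notation ebar := (@ebar K m).
Local Notation dbar := (dbar K S).
Local Notation dbar_e := (dbar_e K S).
Implicit Types (L : {set 'I_m}) (k : 'I_m).

Lemma dbar_fun_is_linear : linear (@dbar_fun K n m S).
Proof.
move=> a f g; rewrite /dbar_fun scaler_sumr -big_split /=; apply: eq_bigr => L _.
by rewrite scalerA -scalerDl !ffunE.
Qed.

HB.instance Definition _ :=
  GRing.isLinear.Build K Tbar Tbar *:%R (@dbar_fun K n m S) dbar_fun_is_linear.

Lemma dbarE f : dbar f = \sum_L f L *: dbar_e L.
Proof. by rewrite lfunE. Qed.

Lemma dbar_ebar L : dbar (ebar L) = dbar_e L.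
Proof.
rewrite dbarE (bigD1 L) //= big1 => [|X /negPf XL]; last by rewrite ebarE XL scale0r.
by rewrite ebarE eqxx scale1r addr0.
Qed.

Definition edge_union (A : {set 'I_m}) : {set 'I_n} := \bigcup_(l in A) S l.

Lemma edge_unionS (A B : {set 'I_m}) : A \subset B -> edge_union A \subset edge_union B.
Proof. by move=> /subsetP AB; apply/bigcupsP => l /AB lB; apply: bigcup_sup lB. Qed.

Lemma edge_unionD1 L k : k \in L -> edge_union L = S k :|: edge_union (L :\ k).
Proof. exact: big_setD1. Qed.

Lemma bigcup_neq_edge_union L k :
  \bigcup_(l in L | l != k) S l = edge_union (L :\ k).
Proof. by apply: eq_bigl => l; rewrite !inE andbC. Qed.

Definition redundant L k := S k \subset edge_union (L :\ k).

Lemma redundantE L k :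
  k \in L -> redundant L k = (edge_union L \subset edge_union (L :\ k)).
Proof. by move=> kL; rewrite (edge_unionD1 kL) subUset subxx andbT. Qed.

Definition tsign L k : K := (-1) ^+ pos L k.

Lemma dbar_eE L :
  dbar_e L = \sum_(k in L | redundant L k) tsign L k *: ebar (L :\ k).
Proof. by apply: eq_bigl => k; rewrite /redundant bigcup_neq_edge_union. Qed.

Lemma pos_setD1_gt L k k' : k \in L -> (k < k')%N -> pos L k' = (pos (L :\ k) k').+1.
Proof.
move=> kL ltkk'; rewrite /pos (cardsD1 k) inE kL ltnW //= add1n.
by congr _.+1; apply: eq_card => l; rewrite !inE; case: (l == k).
Qed.

Lemma pos_setD1_lt L k k' : (k < k')%N -> pos (L :\ k') k = pos L k.
Proof.
move=> ltkk'; apply: eq_card => l; rewrite !inE.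
case: (leqP l k) => lek; rewrite ?andbF // !andbT.
by have -> : l != k' by apply: contraTneq lek => ->; rewrite -ltnNge.
Qed.

Lemma tsign_swap L k k' : k \in L -> (k < k')%N ->
  tsign L k * tsign (L :\ k) k' + tsign L k' * tsign (L :\ k') k = 0.
Proof.
move=> kL ltkk'; rewrite /tsign (pos_setD1_gt kL ltkk') (pos_setD1_lt L ltkk') exprS.
ring.
Qed.

Lemma tsign_sqr L k : tsign L k * tsign L k = 1.
Proof. by rewrite /tsign -exprMn mulrNN mulr1 expr1n. Qed.

Definition redundant2 L k k' :=
  [&& k \in L, redundant L k, k' \in L :\ k & redundant (L :\ k) k'].

Lemma redundant2E L k k' : redundant2 L k k' =
  [&& k \in L, k' \in L, k' != k & edge_union L \subset edge_union (L :\: [set k; k'])].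
Proof.
rewrite /redundant2 in_setD1; have [kL|] //= := boolP (k \in L).
have [k'L|] := boolP (k' \in L); rewrite ?andbF //= andbT.
have [_|k'k] /= := eqVneq k' k; first by rewrite andbF.
rewrite redundantE // redundantE ?in_setD1 ?k'k // -setDDl.
apply/andP/idP => [[sub1 sub2]|sub]; first exact: subset_trans sub2.
split; first exact: subset_trans sub (edge_unionS (subD1set _ _)).
exact: subset_trans (edge_unionS (subD1set _ _)) sub.
Qed.

Lemma redundant2C L k k' : redundant2 L k k' = redundant2 L k' k.
Proof.
rewrite !redundant2E; case: (k \in L); case: (k' \in L) => //=.
by rewrite eq_sym setUC.
Qed.

Lemma dbar_dbar_e L : dbar (dbar_e L) = 0.
Proof.
pose F k k' := if redundant2 L k k'
  then (tsign L k * tsign (L :\ k) k') *: ebar (L :\ k :\ k') else 0.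
have -> : dbar (dbar_e L) = \sum_k \sum_k' F k k'.
  rewrite dbar_eE linear_sum big_mkcond; apply: eq_bigr => k _.
  have [/andP[kL kred]|nkred] := boolP ((k \in L) && redundant L k); last first.
    by rewrite big1 // => k'; rewrite /F /redundant2 andbA (negPf nkred).
  rewrite linearZ /= dbar_ebar dbar_eE scaler_sumr big_mkcond.
  apply: eq_bigr => k' _; rewrite /F /redundant2 kL kred /=.
  by case: ifP; rewrite ?scalerA ?scaler0.
apply: sum_antisym => [k | k k' ltkk'].
  by rewrite /F /redundant2 setD11 /= !andbF.
rewrite /F [redundant2 L k' k]redundant2C.
case: ifP => [/and3P[kL _ _]|]; last by rewrite addr0.
(* Deleting k then k', or k' then k, gives the same face with opposite signs. *)
by rewrite !setDDl setUC -scalerDl tsign_swap // scale0r.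
Qed.

Lemma dbar_dbar f : dbar (dbar f) = 0.
Proof.
rewrite [dbar f]dbarE linear_sum big1 // => L _.
by rewrite linearZ /= dbar_dbar_e scaler0.
Qed.

End TaylorDifferential.

Section Homology.
Variables (K : fieldType) (n m : nat) (S : 'I_m -> {set 'I_n}) (i j : nat).
Local Notation ebar := (@ebar K m).
Local Notation dbar := (dbar K S).
Local Notation span_ebar A := <<[seq ebar L | L <- enum A]>>%VS.
Local Notation B := (Bij K S i j).
Implicit Types (L : {set 'I_m}) (k : 'I_m).

Lemma mem_Tij L : #|L| = i -> edeg S L = j -> ebar L \in Tij K S i j.
Proof. by move=> cL dL; rewrite memv_span // map_f // mem_enum inE cL dL !eqxx. Qed.

Lemma Im_ij_sub_Ker_ij : (Im_ij K S i j <= Ker_ij K S i j)%VS.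
Proof.
apply/subvP => _ /memv_capP[/memv_imgP[f _ ->] fT].
by rewrite /Ker_ij memv_cap memv_ker dbar_dbar eqxx.
Qed.

Lemma span_Bij_sub_Ker_ij : (span_ebar B <= Ker_ij K S i j)%VS.
Proof.
apply/span_subvP => _ /mapP[L + ->].
rewrite mem_enum inE => /and4P[/eqP cL /eqP dL kerL _].
by rewrite /Ker_ij memv_cap kerL mem_Tij.
Qed.

Lemma hyp1_ebar_cycle L :
  hyp1 S i j -> #|L| = i -> edeg S L = j -> ebar L \in lker dbar.
Proof.
move=> h1 cL dL; rewrite memv_ker dbar_ebar dbar_eE big1 // => k /andP[kL kred].
by move: (h1 L cL dL k kL); rewrite bigcup_neq_edge_union -/(redundant S L k) kred.
Qed.

Lemma hyp1_Ker_ij_sub :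
  hyp1 S i j -> (Ker_ij K S i j <= span_ebar B + Im_ij K S i j)%VS.
Proof.
move=> h1; apply/subvP => v /memv_capP[_ vT].
rewrite (Tbar_sum_ebar v) memv_suml // => X _.
have [XT|XnT] := boolP (X \in [set L : {set 'I_m} | (#|L| == i) && (edeg S L == j)]).
2: by rewrite (span_ebarP _ _ vT) // scale0r mem0v.
rewrite memvZ //; move: XT; rewrite inE => /andP[/eqP cX /eqP dX].
have [XIm|XnIm] := boolP (ebar X \in Im_i1 K S i).
  by rewrite (subvP (addvSr _ _)) // /Im_ij memv_cap XIm mem_Tij.
rewrite (subvP (addvSl _ _)) // memv_span // map_f // mem_enum inE cX dX !eqxx XnIm.
by rewrite hyp1_ebar_cycle.
Qed.

Lemma hyp2_dbar_e_setU1 L k : hyp2 S i j -> #|L| = i -> edeg S L = j ->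
  k \notin L -> redundant S (k |: L) k ->
  dbar_e K S (k |: L) = tsign K (k |: L) k *: ebar L.
Proof.
move=> h2 cL dL kL kred; rewrite dbar_eE (bigD1 k) /= ?setU11 ?setU1K //.
rewrite big1 ?addr0 // => k' /andP[/andP[k'L k'red] k'k]; exfalso.
have k'L' : k' \in L by move: k'L; rewrite !inE (negPf k'k).
move: kred; rewrite /redundant setU1K // => kU.
move/negP: (h2 L cL dL k kL kU k' k'L'); apply.
by rewrite bigcup_neq_edge_union.
Qed.

Lemma hyp2_ebar_in_Im L k : hyp2 S i j -> #|L| = i -> edeg S L = j ->
  k \notin L -> redundant S (k |: L) k -> ebar L \in Im_i1 K S i.
Proof.
move=> h2 cL dL kL kred.
have -> : ebar L = dbar (tsign K (k |: L) k *: ebar (k |: L)).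
  by rewrite linearZ /= dbar_ebar hyp2_dbar_e_setU1 // scalerA tsign_sqr scale1r.
by rewrite memv_img // memvZ // mem_Ti // cardsU1 kL cL.
Qed.

Lemma hyp2_dbar_vanishes_on_Bij f L : hyp2 S i j -> L \in B -> dbar f L = 0.
Proof.
move=> h2; rewrite inE => /and4P[/eqP cL /eqP dL _ LnIm].
rewrite dbarE sum_ffunE big1 // => X _; rewrite Tbar_scaleE dbar_eE sum_ffunE.
rewrite big1 ?mulr0 // => k /andP[kX kred]; rewrite Tbar_scaleE ebarE.
have [XkL|] := eqVneq L (X :\ k); last by rewrite mulr0.
have kL : k \notin L by rewrite XkL setD11.
have XE : X = k |: L by rewrite XkL setD1K.
by rewrite XE in kred; rewrite (hyp2_ebar_in_Im h2 cL dL kL kred) in LnIm.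
Qed.

Lemma hyp2_span_Bij_cap_Im : hyp2 S i j -> (span_ebar B :&: Im_ij K S i j = 0)%VS.
Proof.
move=> h2; apply/eqP; rewrite -subv0; apply/subvP => v /memv_capP[vB].
move=> /memv_capP[/memv_imgP[f _ vE] _]; rewrite memv0; apply/eqP/ffunP => X.
rewrite ffunE; have [XB|XnB] := boolP (X \in B); last exact: (span_ebarP _ _ vB).
by rewrite vE hyp2_dbar_vanishes_on_Bij.
Qed.

Lemma hyp2_Bij_free_mod_Im (c : {set 'I_m} -> K) : hyp2 S i j ->
  (\sum_(L in B) c L *: ebar L) \in Im_ij K S i j -> forall L, L \in B -> c L = 0.
Proof.
move=> h2 /memv_capP[/memv_imgP[f _ vE] _] L LB.
have := sum_ebarE (mem B) c L; rewrite vE hyp2_dbar_vanishes_on_Bij //.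
by rewrite -[mem B L]/(L \in B) LB mul1r.
Qed.

Lemma betti_leq_card_Bij : hyp1 S i j -> (betti K S i j <= #|B|)%N.
Proof.
move=> h1; rewrite -(dim_span_ebar K); apply: dimv_subn_leq_of_subv_addv.
exact: hyp1_Ker_ij_sub.
Qed.

Lemma card_Bij_leq_betti : hyp2 S i j -> (#|B| <= betti K S i j)%N.
Proof.
move=> h2; rewrite -(dim_span_ebar K); apply: dimv_leq_subn_of_disjoint.
  exact: hyp2_span_Bij_cap_Im.
by rewrite subv_add span_Bij_sub_Ker_ij Im_ij_sub_Ker_ij.
Qed.

Lemma betti_eq_card_Bij : hyp1 S i j -> hyp2 S i j -> betti K S i j = #|B|.
Proof.
by move=> h1 h2; apply/eqP; rewrite eqn_leq betti_leq_card_Bij ?card_Bij_leq_betti.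
Qed.

End Homology.

Section MaximalDegree.
Variables (n m : nat) (S : 'I_m -> {set 'I_n}) (i : nat).

Lemma tmax_edges_disjoint (L : {set 'I_m}) k :
  #|L| = i -> edeg S L = (tmax S * i)%N -> k \in L ->
  S k :&: edge_union S (L :\ k) = set0.
Proof.
move=> cL dL kL; apply/eqP; rewrite -cards_eq0; set R := edge_union S (L :\ k).
have le_tmax l : (#|S l| <= tmax S)%N by apply: (@leq_bigmax _ (fun a => #|S a|)).
have le_R : (#|R| <= #|L :\ k| * tmax S)%N.
  by rewrite -sum_nat_const (leq_trans (leq_card_bigcup _ _)) // leq_sum.
have card_SkR : #|S k :|: R| = (tmax S * #|L :\ k|.+1)%N.
  have cL' : #|L :\ k|.+1 = i by rewrite -cL (cardsD1 k L) kL.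
  by rewrite -(edge_unionD1 S kL) cL' -dL.
by have := cardsUI (S k) R; move: (le_tmax k); nia.
Qed.

Lemma hyp1_tmax : simple_hypergraph S -> hyp1 S i (tmax S * i).
Proof.
move=> [S_ge2 _] L cL dL k kL; rewrite bigcup_neq_edge_union.
apply/negP => /setIidPl Sk0.
by have := S_ge2 k; rewrite -Sk0 tmax_edges_disjoint // cards0.
Qed.

Lemma hyp2_tmax : simple_hypergraph S -> hyp2 S i (tmax S * i).
Proof.
move=> [_ S_antichain] L cL dL p pL Sp k kL; apply/negP => Sk_sub.
have pk : k != p by apply: contraNneq pL => <-.
move/negP: (S_antichain k p pk); apply; apply/subsetP => x xk.
have /bigcupP[l lP xl] := subsetP Sk_sub x xk.
move: lP; rewrite !inE => /andP[/predU1P[<- // | lL] lk].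
have : x \in S k :&: edge_union S (L :\ k).
  by rewrite inE xk; apply/bigcupP; exists l; rewrite // !inE lk.
by rewrite tmax_edges_disjoint // inE.
Qed.

End MaximalDegree.

Theorem lemma2p2 (K : fieldType) (n m : nat) (S : 'I_m -> {set 'I_n})
  (HS : simple_hypergraph S) (i j : nat) :
  let B := Bij K S i j in
  let e := @ebar K m in
  let span_B := <<[seq e L | L <- enum B]>>%VS in
  (* (1) *)
  (hyp1 S i j ->
     (Ker_ij K S i j <= span_B + Im_ij K S i j)%VS /\
     (betti K S i j <= #|B|)%N) /\
  (* (2) *)
  (hyp2 S i j ->
     (forall c : {set 'I_m} -> K,
        (\sum_(L in B) c L *: e L) \in Im_ij K S i j ->
        forall L, L \in B -> c L = 0) /\
     (#|B| <= betti K S i j)%N) /\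
  (* (3) *)
  (hyp1 S i j -> hyp2 S i j -> betti K S i j = #|B|) /\
  (j = (tmax S * i)%N -> betti K S i j = #|B|).
Proof.
move=> B e span_B.
split; [move=> h1 | split; [move=> h2 | split=> [|Ej]]].
- by split; [apply: hyp1_Ker_ij_sub | apply: betti_leq_card_Bij].
- by split=> [c|]; [apply: hyp2_Bij_free_mod_Im | apply: card_Bij_leq_betti].
- exact: betti_eq_card_Bij.
- by apply: betti_eq_card_Bij; rewrite Ej; [apply: hyp1_tmax | apply: hyp2_tmax].
Qed.
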